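(* Let $R$ be a commutative unital $\mathbb C$-algebra, $c\in\mathbb C\setminus\{0\}$, and let $\partial$ be the unique $R$-linear derivation of the Laurent polynomial ring $R[\lambda,\lambda^{-1}]$ with $\partial\lambda=c$. Let $m\ge1$ and for $k=1,\dots,m$ define the operator \[ D_k=(-1)^{\frac{k(k+1)}2}\sum_{j=0}^{k-1}\frac{(k-1+j)!}{2^j(k-1-j)!\,j!}\,(-c)^j\,\lambda^{-(k+j)}\,\partial^{\,k-j} \] on $R[\lambda,\lambda^{-1}]$ (apply $\partial^{k-j}$, then multiply by $\lambda^{-(k+j)}$). Let $p=\sum_{j=0}^Na_j\lambda^j\in R[\lambda]$. Then $D_kp\in R[\lambda]$ for all $k=1,\dots,m$ if and only if $a_j=0$ for all odd $j$ with $1\le j\le 2m-1$. *)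

From HB Require Import structures.
From mathcomp Require Import all_boot all_order all_algebra.
Set Implicit Arguments. Unset Strict Implicit. Unset Printing Implicit Defensive.
Import Order.TTheory GRing.Theory Num.Theory.
Local Open Scope ring_scope.

(* Laurent polynomials over R are represented by their coefficient
   function  f : int -> R  (f n = coefficient of lambda^n).  All operations
   below are defined coefficientwise, so they agree with the corresponding
   operations on R[lambda, lambda^-1] on finitely supported f. *)

Section Laurent.
Variables (C : numClosedFieldType) (R : comAlgType C).

Definition lpoly_of (p : {poly R}) : int -> R :=
  fun n => match n with Posz k => p`_k | Negz _ => 0 end.

Definition in_poly (f : int -> R) : Prop := forall n : int, n < 0 -> f n = 0.

(* the R-linear derivation with  d lambda = c :  d(lambda^n) = n c lambda^(n-1) *)
Definition lder (c : C) (f : int -> R) : int -> R :=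
  fun n => ((n + 1)%:~R * c) *: f (n + 1).

(* multiplication by lambda^(-m) *)
Definition lshift (m : nat) (f : int -> R) : int -> R :=
  fun n => f (n + (m%:Z)).

Definition Dcoef (k j : nat) : C :=
  ((k.-1 + j)`!)%:R / ((2 ^ j * (k.-1 - j)`! * j`!)%N)%:R.

Definition Dop (c : C) (k : nat) (f : int -> R) : int -> R :=
  fun n => ((-1) ^+ (k * k.+1)./2) *:
    \sum_(j < k) (Dcoef k j * (- c) ^+ j) *: lshift (k + j) (iter (k - j) (lder c) f) n.

End Laurent.

(* On coefficient functions the operator D_k is diagonal up to a shift:
   since  d^i (lambda^a) = a(a-1)...(a-i+1) c^i lambda^(a-i), every term of
   D_k sends lambda^a to a multiple of lambda^(a-2k), so that
       D_k (lambda^a) = (-1)^(k(k+1)/2) c^k B_k(a) lambda^(a-2k),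
   where  B_k(x) = sum_j coef(k,j) (-1)^j x(x-1)...(x-k+j+1).
   The combinatorial heart of the file is the identity
       B_k(x) = x (x-2) (x-4) ... (x-2k+2),
   proved by induction on k from the Pascal-like recurrence of the Bessel
   coefficients  coef(k,j) = (k-1+j)! / (2^j (k-1-j)! j!).
   Hence D_k p has no negative powers of lambda iff p_a = 0 for every
   a < 2k at which the product does not vanish, i.e. for every odd a < 2k.
   The theorem follows since these conditions increase with k. *)

From Pilot Require Import Defs.
From HB Require Import structures.
From mathcomp Require Import all_boot all_order all_algebra ring zify.
Set Implicit Arguments. Unset Strict Implicit. Unset Printing Implicit Defensive.
Import Order.TTheory GRing.Theory Num.Theory.

(* The Bessel coefficients  bessel K j = (K+j)! / (2^j (K-j)! j!)  (zero for
   j > K), defined through their recurrence so that they are visibly natural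
   numbers; [bessel_fact] identifies them with the factorial formula. *)
Fixpoint bessel (K j : nat) : nat :=
  match K, j with
  | 0, _ => j == 0
  | K'.+1, 0 => 1
  | K'.+1, j'.+1 => bessel K' j'.+1 + (K' + j').+1 * bessel K' j'
  end.

Lemma bessel0 K : bessel K 0 = 1. Proof. by case: K. Qed.

Lemma bessel_gt K j : K < j -> bessel K j = 0.
Proof.
elim: K j => [|K IH] [|j] //=; rewrite ltnS => ltKj.
have ltKSj : K < j.+1 by rewrite ltnS ltnW.
by rewrite (IH j ltKj) (IH j.+1 ltKSj) muln0.
Qed.

Lemma bessel_fact K j : j <= K ->
  bessel K j * (2 ^ j * (K - j)`! * j`!) = (K + j)`!.
Proof.
elim: K j => [|K IH] [|j] // lejK.
  by rewrite bessel0 subn0 addn0 !mul1n muln1.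
rewrite ltnS in lejK; rewrite [bessel _ _]/=.
(* the closed form at index j.+1, multiplied out by K - j (also valid when
   j = K, where both sides vanish) *)
have shifted : bessel K j.+1 * (2 ^ j.+1 * (K - j)`! * j.+1`!) =
               (K - j) * (K + j).+1`!.
  case: (ltnP j K) => [ltjK|leKj]; last first.
    have -> : j = K by apply/eqP; rewrite eqn_leq lejK.
    by rewrite bessel_gt // subnn.
  by rewrite -(subnSK ltjK) factS -addnS -(IH _ ltjK); ring.
rewrite subSS addSn addnS [in RHS]factS mulnDl shifted.
have -> : (K + j).+2 = (K - j) + 2 * j.+1 by lia.
by rewrite factS -(IH _ lejK) expnS factS; ring.
Qed.

Local Open Scope ring_scope.

Section BesselFalling.
Variable A : comNzRingType.

Definition falling (x : A) (i : nat) : A := \prod_(t < i) (x - t%:R).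

Lemma fallingS x i : falling x i.+1 = falling x i * (x - i%:R).
Proof. by rewrite /falling big_ord_recr. Qed.

Lemma bessel_falling K x :
  \sum_(j < K.+1) (bessel K j)%:R * (-1) ^+ j * falling x (K.+1 - j) =
  \prod_(i < K.+1) (x - (2 * i)%N%:R).
Proof.
elim: K => [|K IH]; first by rewrite !big_ord1 /falling big_ord1 !mul1r.
rewrite [RHS]big_ord_recr /= -IH mulr_suml big_ord_recl /= subn0 expr0 !mul1r.
(* the terms bessel K j.+1 of the recurrence, together with the j = 0 term,
   reassemble into the sum at level K with one more falling factor *)
have reassemble :
    falling x K.+2 +
    \sum_(j < K.+1) (bessel K j.+1)%:R * (-1) ^+ j.+1 * falling x (K.+1 - j) =
    \sum_(j < K.+1) (bessel K j)%:R * (-1) ^+ j * falling x (K.+2 - j).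
  transitivity
    (\sum_(j < K.+2) (bessel K j)%:R * (-1) ^+ j * falling x (K.+2 - j)).
    rewrite [RHS]big_ord_recl /= subn0 bessel0 expr0 !mul1r.
    by congr (_ + _); apply: eq_bigr => j _; rewrite subSS.
  by rewrite [LHS]big_ord_recr /= bessel_gt // mulr0n !mul0r addr0.
under eq_bigr => j _ do
  rewrite /= /bump leq0n add1n add0n subSS natrD natrM !mulrDl.
rewrite big_split /= addrA reassemble -big_split /=.
(* termwise, the two falling factors combine through
   (x - (K+1-j)) - (K+j+1) = x - 2(K+1) *)
apply: eq_bigr => j _.
have lejK : (j <= K)%N by rewrite -ltnS.
rewrite (subSn (leqW lejK)) fallingS exprS mulN1r.
have -> : x - (2 * K.+1)%N%:R = (x - (K.+1 - j)%N%:R) - (K + j).+1%:R.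
  by rewrite -addrA -opprD -natrD; congr (_ - _%:R); lia.
set f := falling x _; set y := x - _.
(* abstract the remaining factors so that [ring] treats them as atoms *)
clearbody f y; move: (bessel K j)%:R (K + j).+1%:R ((-1) ^+ j : A) => b n s.
by ring.
Qed.

End BesselFalling.

Section Laurent.
Variables (C : numClosedFieldType) (R : comAlgType C) (c : C).

Lemma Dcoef_bessel K j : (j <= K)%N -> Dcoef C K.+1 j = (bessel K j)%:R.
Proof.
move=> lejK; rewrite /Dcoef /= -(bessel_fact lejK) natrM mulfK // pnatr_eq0.
by rewrite -lt0n !muln_gt0 expn_gt0 !fact_gt0.
Qed.

(* the multiplier by which D_k acts:  D_k lambda^a = Dmult k a lambda^(a-2k) *)
Definition Dmult (k : nat) (x : C) : C :=
  (-1) ^+ (k * k.+1)./2 * c ^+ k * \prod_(i < k) (x - (2 * i)%N%:R).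

Lemma iter_lder i (f : int -> R) (n : int) :
  iter i (lder c) f n = (falling (n + i%:Z)%:~R i * c ^+ i) *: f (n + i%:Z).
Proof.
elim: i f n => [|i IH] f n.
  by rewrite /= /falling big_ord0 mul1r expr0 scale1r addr0.
rewrite iterS /lder IH fallingS scalerA.
have -> : n + 1 + i%:Z = n + i.+1%:Z by rewrite intS addrA.
have -> : (n + i.+1%:Z)%:~R - i%:R = (n + 1)%:~R :> C.
  by rewrite intS addrA (intrD _ (n + 1)) -[(i%:Z)%:~R]/(i%:R) addrK.
by rewrite exprS mulrACA (mulrC ((n + 1)%:~R)).
Qed.

Lemma Dop_coef k (f : int -> R) n : (0 < k)%N ->
  Dop c k f n = Dmult k (n + (2 * k)%N%:Z)%:~R *: f (n + (2 * k)%N%:Z).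
Proof.
case: k => [//|K] _; rewrite /Dop /Dmult -(bessel_falling K).
rewrite !mulr_sumr scaler_suml scaler_sumr; apply: eq_bigr => j _.
have lejK : (j <= K.+1)%N by apply: ltnW.
rewrite Dcoef_bessel; last by rewrite -ltnS.
rewrite /Defs.lshift iter_lder !scalerA.
have -> : n + (K.+1 + j)%N%:Z + (K.+1 - j)%N%:Z = n + (2 * K.+1)%N%:Z.
  by rewrite -addrA -PoszD; congr (_ + Posz _); lia.
congr (_ *: _).
have -> : c ^+ K.+1 = c ^+ j * c ^+ (K.+1 - j) by rewrite -exprD subnKC.
by rewrite (exprNn c); ring.
Qed.

Lemma Dmult_eq0 (hc : c != 0) k (a : nat) :
  (Dmult k a%:R == 0) = ~~ odd a && (a < 2 * k)%N.
Proof.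
rewrite /Dmult !mulf_eq0 signr_eq0 expf_eq0 (negPf hc) andbF /=.
apply/prodf_eq0/andP => [[i _] | [evena lta]].
  rewrite subr_eq0 eqr_nat => /eqP ->.
  by rewrite oddM /= ltn_pmul2l.
have lthk : (a./2 < k)%N by rewrite ltn_half_double -mul2n.
exists (Ordinal lthk) => //=.
by rewrite subr_eq0 eqr_nat mul2n even_halfK ?(negPf evena).
Qed.

Lemma Dop_in_poly (hc : c != 0) (p : {poly R}) k : (0 < k)%N ->
  in_poly (Dop c k (lpoly_of p)) <->
  (forall a : nat, (a < 2 * k)%N -> odd a -> p`_a = 0).
Proof.
move=> k_gt0; split=> [Hpoly a lta odda | Hodd n n_lt0].
  have := Hpoly (a%:Z - (2 * k)%N%:Z).
  rewrite subr_lt0 ltz_nat lta Dop_coef // subrK => /(_ isT) Dp0.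
  have mu_neq0 : Dmult k a%:R != 0 by rewrite Dmult_eq0 // odda.
  by rewrite -(scalerK mu_neq0 p`_a); move: Dp0 => /= ->; rewrite scaler0.
rewrite Dop_coef //; case E: (n + (2 * k)%N%:Z) => [a|a]; last first.
  by rewrite /= scaler0.
have lta : (a < 2 * k)%N by rewrite -ltz_nat -E gtrDr.
rewrite /= -[(a%:Z)%:~R]/(a%:R : C).
case odda: (odd a); first by rewrite Hodd // scaler0.
have /eqP -> : Dmult k a%:R == 0 by rewrite Dmult_eq0 // odda.
by rewrite scale0r.
Qed.

End Laurent.

Theorem mainTheorem9 (C : numClosedFieldType) (R : comAlgType C) (c : C)
  (hc : c != 0) (m : nat) (hm : (1 <= m)%N) (p : {poly R}) :
  (forall k : nat, (1 <= k <= m)%N -> in_poly (Dop c k (lpoly_of p))) <->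
  (forall j : nat, odd j -> (1 <= j <= 2 * m - 1)%N -> p`_j = 0).
Proof.
split=> [HD j oddj /andP [_ lej] | Hodd k /andP [k_gt0 lekm]].
  (* the condition for k = m already covers all odd j < 2m *)
  apply: (Dop_in_poly hc p hm).1 oddj; first by apply: HD; rewrite hm leqnn.
  lia.
(* the condition for k <= m is implied by the one for m *)
apply/(Dop_in_poly hc p k_gt0) => a lta odda; apply: Hodd => //.
by apply/andP; split; [case: a odda {lta} | lia].
Qed.
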